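(* Let $G$ be a flag with vertices $v_1,\dots,v_n$ ordered by increasing $x$-coordinate, and let $0<i_1<i_2<i_3<i_4\le n$ with $v_{i_3},v_{i_4}$ both below the edge $v_{i_1}v_{i_2}$. Then the following are equivalent: (1) $v_{i_1}v_{i_2}$ and $v_{i_3}v_{i_4}$ cross; (2) $(v_{i_1}v_{i_2})^+$ and $(v_{i_3}v_{i_4})^-$ cross; (3) $v_{i_2}$ is below $v_{i_3}v_{i_4}$, $v_{i_1}$ is above $v_{i_3}v_{i_4}$, and $(v_{i_3}v_{i_4})^-\prec(v_{i_1}v_{i_2})^-$. Moreover, $v_{i_1}v_{i_2}$ and $v_{i_3}v_{i_4}$ are disjoint if and only if $v_{i_1},v_{i_2}$ are both above $v_{i_3}v_{i_4}$. Symmetrically, if instead $v_{i_3},v_{i_4}$ are both above $v_{i_1}v_{i_2}$, then the following are equivalent: (1) the two edges cross; (2) $(v_{i_1}v_{i_2})^+$ and $(v_{i_3}v_{i_4})^-$ cross; (3) $v_{i_2}$ is above $v_{i_3}v_{i_4}$, $v_{i_1}$ is below $v_{i_3}v_{i_4}$, and $(v_{i_1}v_{i_2})^-\prec(v_{i_3}v_{i_4})^-$; and the two edges are disjoint if and only if $v_{i_1},v_{i_2}$ are both below $v_{i_3}v_{i_4}$.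
   Context: Let $\mathcal C=S^1\times\mathbb R$ ($S^1=[0,1]$ with $0\sim1$), points $p=(p_x,p_y)$ with $0\le p_x<1$. A flag is a graph drawn on $\mathcal C$ (vertices distinct points, edges Jordan arcs, no overlapping edges, no edge through a vertex) that is complete, simple (any two edges meet in at most one point: a common endpoint or a proper crossing), monotone (every edge meets each vertical line $l_{x=a}=\{p:p_x=a\}$ at most once, no two vertices share an $x$-coordinate, no vertex has $x$-coordinate $0$), and such that $l_{x=0}$ meets every edge in its relative interior. For an edge $e=vw$ of a flag with $v_x<w_x$, $e^-$ is the part of $e$ consisting of points with $x$-coordinate smaller than $v_x$ and $e^+$ the part consisting of points with $x$-coordinate greater than $w_x$. A point $v$ is related to an $x$-monotone curve $e$ if $l_{x=v_x}$ meets $e$ in its relative interior; then $v$ is below (above) $e$ if $v_y$ is smaller (larger) than the $y$-coordinate of $l_{x=v_x}\cap e$. Two $x$-monotone curves $e,f$ are related if they do not cross, some vertical line meets both relative interiors, and all such lines meet them in the same vertical order; then $e\prec f$ means that on every vertical line meeting both relative interiors, $e$'s point has $y$-coordinate at most that of $f$'s point. Two edges are disjoint if they share no point. *)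

From Stdlib Require Export Reals.
Open Scope R_scope.

(* The cylinder C = S^1 x R, points (x,y) with 0 <= x < 1.
   An x-monotone curve is represented by a parameter interval [lo,hi]
   (with hi - lo <= 1) and a function cg; its point at parameter t is
   (frac_part t, cg t). *)
Record xcurve := mkC { lo : R; hi : R; cg : R -> R }.

Definition cx (t : R) : R := frac_part t.
Definition pt (c : xcurve) (t : R) : R * R := (cx t, cg c t).
Definition interior (c : xcurve) (t : R) : Prop := lo c < t < hi c.
Definition on_closed (c : xcurve) (t : R) : Prop := lo c <= t <= hi c.

Definition cont_on (g : R -> R) (a b : R) : Prop :=
  forall t, a <= t <= b -> forall eps, 0 < eps -> exists delta, 0 < delta /\
    forall u, a <= u <= b -> Rabs (u - t) < delta -> Rabs (g u - g t) < eps.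

Definition crosses_at (c1 c2 : xcurve) (t1 t2 : R) : Prop :=
  interior c1 t1 /\ interior c2 t2 /\ cx t1 = cx t2 /\ cg c1 t1 = cg c2 t2 /\
  exists eps, 0 < eps /\ lo c1 < t1 - eps /\ t1 + eps < hi c1 /\
    lo c2 < t2 - eps /\ t2 + eps < hi c2 /\
    ((forall s, 0 < s < eps ->
        cg c1 (t1 - s) < cg c2 (t2 - s) /\ cg c2 (t2 + s) < cg c1 (t1 + s)) \/
     (forall s, 0 < s < eps ->
        cg c2 (t2 - s) < cg c1 (t1 - s) /\ cg c1 (t1 + s) < cg c2 (t2 + s))).

Definition cross (c1 c2 : xcurve) : Prop := exists t1 t2, crosses_at c1 c2 t1 t2.

Definition disjoint (c1 c2 : xcurve) : Prop :=
  forall t1 t2, on_closed c1 t1 -> on_closed c2 t2 -> pt c1 t1 <> pt c2 t2.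

Definition below (c : xcurve) (p : R * R) : Prop :=
  exists t, interior c t /\ cx t = fst p /\ snd p < cg c t.
Definition above (c : xcurve) (p : R * R) : Prop :=
  exists t, interior c t /\ cx t = fst p /\ cg c t < snd p.

Definition same_line (c1 c2 : xcurve) (t1 t2 : R) : Prop :=
  interior c1 t1 /\ interior c2 t2 /\ cx t1 = cx t2.

Definition related (c1 c2 : xcurve) : Prop :=
  ~ cross c1 c2 /\ (exists t1 t2, same_line c1 c2 t1 t2) /\
  ((forall t1 t2, same_line c1 c2 t1 t2 -> cg c1 t1 <= cg c2 t2) \/
   (forall t1 t2, same_line c1 c2 t1 t2 -> cg c2 t2 <= cg c1 t1)).

Definition prec (c1 c2 : xcurve) : Prop :=
  related c1 c2 /\ forall t1 t2, same_line c1 c2 t1 t2 -> cg c1 t1 <= cg c2 t2.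

(* For i < j the edge v_i v_j is monotone and meets x = 0 in its interior,
   hence it is the graph over the arc [vx j, 1) u [0, vx i] of S^1, i.e.
   parameter interval [vx j, vx i + 1] with function eg i j. *)
Definition vtx (vx vy : nat -> R) (k : nat) : R * R := (vx k, vy k).
Definition edge (vx : nat -> R) (eg : nat -> nat -> R -> R) (i j : nat) : xcurve :=
  mkC (vx j) (vx i + 1) (eg i j).
(* e^- : points with x-coordinate < vx i *)
Definition edge_minus (vx : nat -> R) (eg : nat -> nat -> R -> R) (i j : nat) : xcurve :=
  mkC 1 (vx i + 1) (eg i j).
(* e^+ : points with x-coordinate > vx j *)
Definition edge_plus (vx : nat -> R) (eg : nat -> nat -> R -> R) (i j : nat) : xcurve :=
  mkC (vx j) 1 (eg i j).

Definition is_flag (n : nat) (vx vy : nat -> R) (eg : nat -> nat -> R -> R) : Prop :=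
  (forall k, (1 <= k <= n)%nat -> 0 < vx k < 1) /\
  (forall k, (1 <= k < n)%nat -> vx k < vx (S k)) /\
  (forall i j, (1 <= i < j)%nat -> (j <= n)%nat ->
     cont_on (eg i j) (vx j) (vx i + 1) /\
     eg i j (vx j) = vy j /\ eg i j (vx i + 1) = vy i /\
     (forall k, (1 <= k <= n)%nat -> k <> i -> k <> j ->
        forall t, on_closed (edge vx eg i j) t -> pt (edge vx eg i j) t <> vtx vx vy k)) /\
  (forall i j k l, (1 <= i < j)%nat -> (j <= n)%nat -> (1 <= k < l)%nat -> (l <= n)%nat ->
     (i, j) <> (k, l) ->
     (forall t1 s1 t2 s2,
        on_closed (edge vx eg i j) t1 -> on_closed (edge vx eg k l) s1 ->
        on_closed (edge vx eg i j) t2 -> on_closed (edge vx eg k l) s2 ->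
        pt (edge vx eg i j) t1 = pt (edge vx eg k l) s1 ->
        pt (edge vx eg i j) t2 = pt (edge vx eg k l) s2 ->
        pt (edge vx eg i j) t1 = pt (edge vx eg i j) t2) /\
     (forall t s, on_closed (edge vx eg i j) t -> on_closed (edge vx eg k l) s ->
        pt (edge vx eg i j) t = pt (edge vx eg k l) s ->
        (exists m, (m = i \/ m = j) /\ (m = k \/ m = l) /\
                   pt (edge vx eg i j) t = vtx vx vy m) \/
        crosses_at (edge vx eg i j) (edge vx eg k l) t s)).

From Stdlib Require Import Lra Psatz Lia.
Open Scope R_scope.

(* Over the x-axis the edges E = v1v2 and F = v3v4 overlap in two arcs: around
   x = 0, from v4 to v1, and from v2 to v3.  In a flag two edges meet at most
   once and always properly, so the vertical difference of E and F vanishes on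
   an arc exactly when it changes sign between the ends of the arc, and these
   signs record where v4, v1 (resp. v2, v3) lie relative to the other edge.
   The edge v2v3 meets E and F only at v2 and v3; comparing it with E over the
   arc from v3 to v1 and with F over the arc from v4 to v2 shows that if v3 is
   below E and v2 is above F, then v1 is above F.  Hence, with v3 and v4 below
   E, either v2 is below F and the edges cross, exactly once and between v2 and
   v3 (so E^+ and F^- cross) with F below E near x = 0, or v1 and v2 are above
   F and the edges are disjoint.  The case of v3, v4 above E is its mirror
   image in the x-axis. *)

Lemma cx_id t : 0 <= t < 1 -> cx t = t.
Proof.
  intros Ht; unfold cx.
  destruct (Int_part_frac_part_spec t 0 t) as [_ E]; [lra | ring | symmetry; exact E].
Qed.

Lemma cx_sub1 t : 1 <= t < 2 -> cx t = t - 1.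
Proof.
  intros Ht; unfold cx.
  destruct (Int_part_frac_part_spec t 1 (t - 1)) as [_ E]; [lra | ring | symmetry; exact E].
Qed.

Lemma cx_add1 t : 0 <= t < 1 -> cx (t + 1) = t.
Proof. intros Ht; rewrite cx_sub1; lra. Qed.

Lemma cx_eq_cases t s : 0 <= t < 2 -> 0 <= s < 2 -> cx t = cx s ->
  t = s \/ t = s + 1 \/ s = t + 1.
Proof.
  intros Ht Hs E.
  destruct (Rlt_or_le t 1), (Rlt_or_le s 1);
    [rewrite (cx_id t), (cx_id s) in E | rewrite (cx_id t), (cx_sub1 s) in E
    | rewrite (cx_sub1 t), (cx_id s) in E | rewrite (cx_sub1 t), (cx_sub1 s) in E];
    lra.
Qed.

Lemma cx_not_in_gap t x u v : 0 <= v -> v < x -> x < u -> u < 1 -> u <= t <= v + 1 -> cx t <> x.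
Proof.
  intros Hv Hvx Hxu Hu Ht.
  destruct (Rlt_or_le t 1); [rewrite cx_id | rewrite cx_sub1]; lra.
Qed.

Lemma cont_on_sub g a b a' b' : a <= a' -> b' <= b -> cont_on g a b -> cont_on g a' b'.
Proof.
  intros Ha Hb C t Ht eps Heps.
  destruct (C t ltac:(lra) eps Heps) as [delta [Hdelta Hclose]].
  exists delta; split; [exact Hdelta |].
  intros u Hu; apply Hclose; lra.
Qed.

Lemma cont_on_shift g a b : cont_on g (a + 1) (b + 1) -> cont_on (fun u => g (u + 1)) a b.
Proof.
  intros C t Ht eps Heps.
  destruct (C (t + 1) ltac:(lra) eps Heps) as [delta [Hdelta Hclose]].
  exists delta; split; [exact Hdelta |].
  intros u Hu Hut; apply Hclose; [lra |].
  replace (u + 1 - (t + 1)) with (u - t) by ring; exact Hut.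
Qed.

Lemma cont_on_opp g a b : cont_on g a b -> cont_on (fun u => - g u) a b.
Proof.
  intros C t Ht eps Heps.
  destruct (C t Ht eps Heps) as [delta [Hdelta Hclose]].
  exists delta; split; [exact Hdelta |].
  intros u Hu Hut.
  replace (- g u - - g t) with (- (g u - g t)) by ring.
  rewrite Rabs_Ropp; auto.
Qed.

Lemma cont_on_minus g h a b : cont_on g a b -> cont_on h a b -> cont_on (fun u => g u - h u) a b.
Proof.
  intros Cg Ch t Ht eps Heps.
  destruct (Cg t Ht (eps / 2) ltac:(lra)) as [d1 [Hd1 Hg]].
  destruct (Ch t Ht (eps / 2) ltac:(lra)) as [d2 [Hd2 Hh]].
  exists (Rmin d1 d2); split; [apply Rmin_pos; assumption |].
  intros u Hu Hut.
  pose proof (Hg u Hu ltac:(pose proof (Rmin_l d1 d2); lra)).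
  pose proof (Hh u Hu ltac:(pose proof (Rmin_r d1 d2); lra)).
  replace (g u - h u - (g t - h t)) with ((g u - g t) + - (h u - h t)) by ring.
  pose proof (Rabs_triang (g u - g t) (- (h u - h t))).
  rewrite Rabs_Ropp in *; lra.
Qed.

(* Extends a function continuous on [p, q] to a continuous function on R,
   to which Stdlib's IVT applies. *)
Definition clamp p q t := Rmax p (Rmin q t).

Lemma clamp_range p q t : p <= q -> p <= clamp p q t <= q.
Proof. intros; unfold clamp, Rmax, Rmin; repeat destruct Rle_dec; lra. Qed.

Lemma clamp_id p q t : p <= t <= q -> clamp p q t = t.
Proof. intros; unfold clamp, Rmax, Rmin; repeat destruct Rle_dec; lra. Qed.

Lemma clamp_lipschitz p q t u : p <= q -> Rabs (clamp p q u - clamp p q t) <= Rabs (u - t).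
Proof.
  intros; unfold clamp, Rmax, Rmin, Rabs.
  repeat destruct Rle_dec; repeat destruct Rcase_abs; lra.
Qed.

Lemma continuity_clamp D p q : p <= q -> cont_on D p q -> continuity (fun t => D (clamp p q t)).
Proof.
  intros Hpq C x; unfold continuity_pt, continue_in, limit1_in, limit_in.
  intros eps Heps.
  destruct (C (clamp p q x) (clamp_range p q x Hpq) eps Heps) as [delta [Hdelta Hclose]].
  exists delta; split; [exact Hdelta |].
  intros y [_ Hy]; simpl in *; unfold R_dist in *.
  apply Hclose; [apply clamp_range; exact Hpq |].
  eapply Rle_lt_trans; [apply clamp_lipschitz |]; assumption.
Qed.

Lemma cont_on_ivt D p q : p < q -> cont_on D p q -> D p * D q < 0 ->
  exists z, p <= z <= q /\ D z = 0.
Proof.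
  intros Hpq C Hsign.
  pose proof (continuity_clamp D p q ltac:(lra) C) as K.
  assert (Ep : D (clamp p q p) = D p) by (rewrite clamp_id; [reflexivity | lra]).
  assert (Eq : D (clamp p q q) = D q) by (rewrite clamp_id; [reflexivity | lra]).
  destruct (Rlt_or_le (D p) 0) as [Hp | Hp].
  - destruct (IVT _ p q K Hpq) as [z [Hz Ez]]; [lra | nra |].
    exists z; rewrite clamp_id in Ez; auto.
  - assert (0 < D p) by (destruct Hp as [| E0]; [assumption | rewrite <- E0 in Hsign; lra]).
    destruct (IVT _ p q (continuity_opp _ K) Hpq) as [z [Hz Ez]];
      unfold opp_fct in *; [lra | nra |].
    exists z; rewrite clamp_id in Ez; [split; [exact Hz | lra] | exact Hz].
Qed.

Lemma same_sign_of_no_root D p q : p <= q -> cont_on D p q ->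
  (forall z, p <= z <= q -> D z <> 0) -> forall x, p <= x <= q -> 0 < D p * D x.
Proof.
  intros Hpq C Nz x Hx.
  assert (D p <> 0) by (apply Nz; lra).
  assert (D x <> 0) by (apply Nz; lra).
  destruct (Rtotal_order 0 (D p * D x)) as [Hpos | [Hzero | Hneg]]; [exact Hpos | |].
  - symmetry in Hzero; apply Rmult_integral in Hzero; tauto.
  - destruct (Req_dec p x) as [-> | Hne]; [nra |].
    destruct (cont_on_ivt D p x ltac:(lra) (cont_on_sub D p q p x ltac:(lra) ltac:(lra) C) Hneg)
      as [z [Hz Ez]].
    exfalso; apply (Nz z); [lra | exact Ez].
Qed.

Lemma no_root_of_same_sign D p q : p < q -> cont_on D p q -> 0 < D p * D q ->
  (forall z z', p <= z <= q -> p <= z' <= q -> D z = 0 -> D z' = 0 -> z = z') ->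
  (forall z, p < z < q -> D z = 0 ->
     exists s, 0 < s /\ p <= z - s /\ z + s <= q /\ D (z - s) * D (z + s) < 0) ->
  forall z, p <= z <= q -> D z <> 0.
Proof.
  intros Hpq C Hsign Uniq Change z Hz Ez.
  assert (Hz' : p < z < q).
  { assert (z <> p) by (intros ->; rewrite Ez in Hsign; lra).
    assert (z <> q) by (intros ->; rewrite Ez in Hsign; lra).
    lra. }
  destruct (Change z Hz' Ez) as [s [Hs [Hl [Hr Hss]]]].
  destruct (Rlt_or_le (D p * D (z - s)) 0) as [Hleft | Hleft].
  - assert (p < z - s) by (destruct Hl as [| E0]; [assumption | rewrite <- E0 in Hleft; nra]).
    destruct (cont_on_ivt D p (z - s)) as [z' [Hz'' Ez']];
      [lra | eapply cont_on_sub; [| | exact C]; lra | exact Hleft |].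
    assert (z' = z) by (apply Uniq; auto; lra); lra.
  - assert (Hright : D (z + s) * D q < 0) by nra.
    assert (z + s < q) by (destruct Hr as [| E0]; [assumption | rewrite E0 in Hright; nra]).
    destruct (cont_on_ivt D (z + s) q) as [z' [Hz'' Ez']];
      [lra | eapply cont_on_sub; [| | exact C]; lra | exact Hright |].
    assert (z' = z) by (apply Uniq; auto; lra); lra.
Qed.

Lemma interior_param_unique c t t' : 0 <= lo c -> hi c <= 2 -> hi c - lo c < 1 ->
  interior c t -> interior c t' -> cx t = cx t' -> t = t'.
Proof.
  intros Hlo Hhi Hlen [Ht1 Ht2] [Ht1' Ht2'] E.
  destruct (cx_eq_cases t t' ltac:(lra) ltac:(lra) E) as [| [|]]; lra.
Qed.

Lemma below_at c t x y : 0 <= lo c -> hi c <= 2 -> hi c - lo c < 1 -> interior c t ->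
  cx t = x -> below c (x, y) <-> y < cg c t.
Proof.
  intros Hlo Hhi Hlen It <-; split.
  - intros [t' [It' [E Hy]]]; simpl in *.
    rewrite <- (interior_param_unique c t' t); auto.
  - intros Hy; exists t; auto.
Qed.

Lemma above_at c t x y : 0 <= lo c -> hi c <= 2 -> hi c - lo c < 1 -> interior c t ->
  cx t = x -> above c (x, y) <-> cg c t < y.
Proof.
  intros Hlo Hhi Hlen It <-; split.
  - intros [t' [It' [E Hy]]]; simpl in *.
    rewrite <- (interior_param_unique c t' t); auto.
  - intros Hy; exists t; auto.
Qed.

Lemma same_line_sym c1 c2 t1 t2 : same_line c1 c2 t1 t2 <-> same_line c2 c1 t2 t1.
Proof. unfold same_line; intuition. Qed.

Lemma crosses_at_sym c1 c2 t1 t2 : crosses_at c1 c2 t1 t2 -> crosses_at c2 c1 t2 t1.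
Proof.
  intros [I1 [I2 [Ex [Eg [eps [He [L1 [L2 [L3 [L4 Hs]]]]]]]]]].
  do 4 (split; [auto |]).
  exists eps; do 5 (split; [auto |]).
  destruct Hs as [Hs | Hs]; [right | left]; exact Hs.
Qed.

Lemma cross_sym c1 c2 : cross c1 c2 -> cross c2 c1.
Proof. intros [t1 [t2 C]]; exists t2, t1; apply crosses_at_sym; exact C. Qed.

Lemma crosses_at_local l1 h1 g1 l2 h2 g2 l1' h1' l2' h2' t1 t2 :
  crosses_at (mkC l1 h1 g1) (mkC l2 h2 g2) t1 t2 -> l1' < t1 < h1' -> l2' < t2 < h2' ->
  crosses_at (mkC l1' h1' g1) (mkC l2' h2' g2) t1 t2.
Proof.
  intros [_ [_ [Ex [Eg [eps [He [_ [_ [_ [_ Hs]]]]]]]]]] I1 I2; simpl in *.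
  set (m := Rmin eps (Rmin (Rmin (t1 - l1') (h1' - t1)) (Rmin (t2 - l2') (h2' - t2)))).
  assert (0 < m /\ m <= eps /\ m <= t1 - l1' /\ m <= h1' - t1 /\ m <= t2 - l2' /\ m <= h2' - t2)
    by (unfold m, Rmin; repeat destruct Rle_dec; lra).
  unfold crosses_at, interior; simpl.
  repeat split; auto; try lra.
  exists (m / 2); repeat split; try lra.
  destruct Hs as [Hs | Hs]; [left | right]; intros s Hs'; apply Hs; lra.
Qed.

Lemma crosses_at_sign_change c1 c2 t1 t2 : crosses_at c1 c2 t1 t2 ->
  exists s, 0 < s /\ lo c1 < t1 - s /\ t1 + s < hi c1 /\ lo c2 < t2 - s /\ t2 + s < hi c2 /\
    (cg c1 (t1 - s) - cg c2 (t2 - s)) * (cg c1 (t1 + s) - cg c2 (t2 + s)) < 0.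
Proof.
  intros [_ [_ [_ [_ [eps [He [L1 [L2 [L3 [L4 Hs]]]]]]]]]].
  exists (eps / 2); repeat split; try lra.
  destruct Hs as [Hs | Hs]; destruct (Hs (eps / 2)) as [Hl Hr]; try lra; nra.
Qed.

Lemma prec_of_lt h1 h2 g1 g2 : 1 < h1 < 2 -> 1 < h2 < 2 ->
  (forall t, 1 < t < h1 -> t < h2 -> g1 t < g2 t) -> prec (mkC 1 h1 g1) (mkC 1 h2 g2).
Proof.
  intros Hh1 Hh2 Lt.
  assert (Diag : forall t1 t2, same_line (mkC 1 h1 g1) (mkC 1 h2 g2) t1 t2 ->
                   t1 = t2 /\ 1 < t1 < h1 /\ t1 < h2).
  { intros t1 t2 [[A B] [[A' B'] E]]; simpl in *.
    destruct (cx_eq_cases t1 t2 ltac:(lra) ltac:(lra) E) as [-> | [|]]; lra. }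
  assert (Ord : forall t1 t2, same_line (mkC 1 h1 g1) (mkC 1 h2 g2) t1 t2 -> g1 t1 <= g2 t2).
  { intros t1 t2 S; destruct (Diag t1 t2 S) as [-> [A B]]; left; apply Lt; lra. }
  split; [split; [| split; [| left; exact Ord]] | exact Ord].
  - intros [t1 [t2 [I1 [I2 [E [G _]]]]]]; simpl in G.
    destruct (Diag t1 t2) as [-> [A B]]; [split; auto |].
    specialize (Lt t2 ltac:(lra) B); lra.
  - set (m := Rmin h1 h2).
    assert (1 < m /\ m <= h1 /\ m <= h2) by (unfold m, Rmin; destruct Rle_dec; lra).
    exists ((1 + m) / 2), ((1 + m) / 2); unfold same_line, interior; simpl.
    repeat split; lra.
Qed.

Definition mirror (c : xcurve) : xcurve := mkC (lo c) (hi c) (fun t => - cg c t).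
Definition mirror_pt (p : R * R) : R * R := (fst p, - snd p).

Lemma mirror_pt_inj p q : mirror_pt p = mirror_pt q -> p = q.
Proof.
  destruct p as [x y], q as [x' y']; unfold mirror_pt; simpl; intros E.
  injection E as Ex Ey; f_equal; lra.
Qed.

Lemma crosses_at_mirror c1 c2 t1 t2 :
  crosses_at (mirror c1) (mirror c2) t1 t2 <-> crosses_at c1 c2 t1 t2.
Proof.
  unfold crosses_at; simpl.
  split; intros [I1 [I2 [Ex [Eg [eps [He [L1 [L2 [L3 [L4 Hs]]]]]]]]]];
    (do 3 (split; [assumption |]); split; [lra |]);
    exists eps; do 5 (split; [assumption |]);
    (destruct Hs as [Hs | Hs]; [right | left]; intros s Hs'; specialize (Hs s Hs'); lra).
Qed.

Lemma cross_mirror c1 c2 : cross (mirror c1) (mirror c2) <-> cross c1 c2.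
Proof.
  split; intros [t1 [t2 C]]; exists t1, t2; apply crosses_at_mirror; exact C.
Qed.

Lemma disjoint_mirror c1 c2 : disjoint (mirror c1) (mirror c2) <-> disjoint c1 c2.
Proof.
  split; intros D t1 t2 H1 H2 E; apply (D t1 t2 H1 H2).
  - change (mirror_pt (pt c1 t1) = mirror_pt (pt c2 t2)); rewrite E; reflexivity.
  - apply mirror_pt_inj; exact E.
Qed.

Lemma below_mirror c p : below (mirror c) (mirror_pt p) <-> above c p.
Proof. unfold below, above; simpl; split; intros [t [It [E L]]]; exists t; auto with real. Qed.

Lemma above_mirror c p : above (mirror c) (mirror_pt p) <-> below c p.
Proof. unfold below, above; simpl; split; intros [t [It [E L]]]; exists t; auto with real. Qed.

Lemma order_mirror c1 c2 :
  (forall t1 t2, same_line (mirror c1) (mirror c2) t1 t2 -> cg (mirror c1) t1 <= cg (mirror c2) t2)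
  <-> (forall t1 t2, same_line c2 c1 t1 t2 -> cg c2 t1 <= cg c1 t2).
Proof.
  simpl; split; intros Ord t1 t2 S; apply same_line_sym in S; specialize (Ord t2 t1 S); lra.
Qed.

Lemma prec_mirror c1 c2 : prec (mirror c1) (mirror c2) <-> prec c2 c1.
Proof.
  unfold prec, related; rewrite cross_mirror, order_mirror.
  assert (Sw : forall d1 d2, (exists t1 t2, same_line d1 d2 t1 t2) ->
                             exists t1 t2, same_line d2 d1 t1 t2)
    by (intros d1 d2 [t1 [t2 S]]; exists t2, t1; apply same_line_sym; exact S).
  split; intros [[NC [Ex _]] Ord]; (split; [split; [| split] | exact Ord]);
    try (intro C; apply NC, cross_sym, C); try (left; exact Ord); apply Sw, Ex.
Qed.

Section Quadrilateral.

(* The vertices are (a, y1), ..., (d, y4), and e, f, g parametrize the edges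
   v1v2, v3v4, v2v3 as in [edge]. *)
Variables a b c d y1 y2 y3 y4 : R.
Variables e f g : R -> R.

Hypotheses (a_pos : 0 < a) (a_lt_b : a < b) (b_lt_c : b < c) (c_lt_d : c < d) (d_lt_1 : d < 1).
Hypotheses (e_cont : cont_on e b (a + 1)) (f_cont : cont_on f d (c + 1))
  (g_cont : cont_on g c (b + 1)).
Hypotheses (e_b : e b = y2) (e_a1 : e (a + 1) = y1) (f_d : f d = y4) (f_c1 : f (c + 1) = y3)
  (g_c : g c = y3) (g_b1 : g (b + 1) = y2).
Hypotheses (f_a1 : f (a + 1) <> y1) (f_b1 : f (b + 1) <> y2) (e_c : e c <> y3) (e_d : e d <> y4).
Hypothesis EF_cross : forall t s, b <= t <= a + 1 -> d <= s <= c + 1 -> cx t = cx s -> e t = f s ->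
  crosses_at (mkC b (a + 1) e) (mkC d (c + 1) f) t s.
Hypothesis EF_once : forall t1 s1 t2 s2,
  b <= t1 <= a + 1 -> d <= s1 <= c + 1 -> b <= t2 <= a + 1 -> d <= s2 <= c + 1 ->
  cx t1 = cx s1 -> e t1 = f s1 -> cx t2 = cx s2 -> e t2 = f s2 -> cx t1 = cx t2.
Hypothesis GE_apart : forall t, c <= t <= a + 1 -> g t <> e t.
Hypothesis GF_apart : forall t, d <= t <= b + 1 -> g t <> f t.

Local Notation E := (mkC b (a + 1) e).
Local Notation F := (mkC d (c + 1) f).

(* E and F lie over a common x in two arcs: over [d, 1) u [0, a] both use the
   same parameter, over [b, c] the parameter of F is that of E plus one. *)
Let dA t := e t - f t.
Let dB t := e t - f (t + 1).

Lemma dA_cont : cont_on dA d (a + 1).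
Proof.
  apply cont_on_minus;
    [eapply cont_on_sub; [| | exact e_cont] | eapply cont_on_sub; [| | exact f_cont]]; lra.
Qed.

Lemma dB_cont : cont_on dB b c.
Proof.
  apply cont_on_minus; [eapply cont_on_sub; [| | exact e_cont]; lra |].
  apply cont_on_shift; eapply cont_on_sub; [| | exact f_cont]; lra.
Qed.

Lemma cross_iff_root :
  cross E F <-> (exists z, d <= z <= a + 1 /\ dA z = 0) \/ (exists z, b <= z <= c /\ dB z = 0).
Proof.
  unfold dA, dB; split.
  - intros [t [s [[I1 I1'] [[I2 I2'] [Ex [Eg _]]]]]]; simpl in *.
    destruct (cx_eq_cases t s ltac:(lra) ltac:(lra) Ex) as [<- | [-> | ->]].
    + left; exists t; split; lra.
    + lra.
    + right; exists t; split; lra.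
  - intros [[z [Hz Z]] | [z [Hz Z]]]; [exists z, z | exists z, (z + 1)]; apply EF_cross; try lra.
    rewrite cx_add1 by lra; apply cx_id; lra.
Qed.

Lemma disjoint_iff_not_cross : disjoint E F <-> ~ cross E F.
Proof.
  split.
  - intros D [t [s [[I1 I1'] [[I2 I2'] [Ex [Eg _]]]]]]; simpl in *.
    apply (D t s); unfold on_closed, pt; simpl; [lra | lra | rewrite Ex, Eg; reflexivity].
  - intros NC t s Ht Hs E; unfold on_closed, pt in *; simpl in *; injection E as Ex Eg.
    apply NC; exists t, s; apply EF_cross; auto.
Qed.

Lemma dA_root_crosses z : d <= z <= a + 1 -> dA z = 0 -> crosses_at E F z z.
Proof. unfold dA; intros Hz Z; apply EF_cross; lra. Qed.

Lemma dB_root_crosses z : b <= z <= c -> dB z = 0 -> crosses_at E F z (z + 1).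
Proof.
  unfold dB; intros Hz Z; apply EF_cross; try lra.
  rewrite cx_add1 by lra; apply cx_id; lra.
Qed.

Lemma dA_root_unique z z' :
  d <= z <= a + 1 -> d <= z' <= a + 1 -> dA z = 0 -> dA z' = 0 -> z = z'.
Proof.
  unfold dA; intros Hz Hz' Z Z'.
  assert (E : cx z = cx z') by (apply (EF_once z z z' z'); lra).
  destruct (cx_eq_cases z z' ltac:(lra) ltac:(lra) E) as [| [|]]; lra.
Qed.

Lemma dB_root_unique z z' : b <= z <= c -> b <= z' <= c -> dB z = 0 -> dB z' = 0 -> z = z'.
Proof.
  unfold dB; intros Hz Hz' Z Z'.
  assert (E : cx z = cx z')
    by (apply (EF_once z (z + 1) z' (z' + 1)); try lra; rewrite cx_add1 by lra; apply cx_id; lra).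
  rewrite !cx_id in E; lra.
Qed.

Lemma dA_dB_roots_exclusive z z' :
  d <= z <= a + 1 -> b <= z' <= c -> dA z = 0 -> dB z' = 0 -> False.
Proof.
  unfold dA, dB; intros Hz Hz' Z Z'.
  assert (E : cx z = cx z')
    by (apply (EF_once z z z' (z' + 1)); try lra; rewrite cx_add1 by lra; apply cx_id; lra).
  rewrite (cx_id z') in E by lra.
  destruct (Rlt_or_le z 1); [rewrite cx_id in E | rewrite cx_sub1 in E]; lra.
Qed.

Lemma dA_no_root : 0 < dA d * dA (a + 1) -> forall z, d <= z <= a + 1 -> dA z <> 0.
Proof.
  intros Hsign; apply no_root_of_same_sign;
    [lra | exact dA_cont | exact Hsign | exact dA_root_unique |].
  intros z Hz Z.
  destruct (crosses_at_sign_change _ _ _ _ (dA_root_crosses z ltac:(lra) Z))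
    as [s [Hs [L1 [R1 [L2 [R2 Hss]]]]]]; simpl in *.
  exists s; repeat split; [lra | lra | lra | exact Hss].
Qed.

Lemma dB_no_root : 0 < dB b * dB c -> forall z, b <= z <= c -> dB z <> 0.
Proof.
  intros Hsign; apply no_root_of_same_sign;
    [lra | exact dB_cont | exact Hsign | exact dB_root_unique |].
  intros z Hz Z.
  destruct (crosses_at_sign_change _ _ _ _ (dB_root_crosses z ltac:(lra) Z))
    as [s [Hs [L1 [R1 [L2 [R2 Hss]]]]]]; simpl in *.
  exists s; repeat split; [lra | lra | lra |].
  unfold dB; replace (z - s + 1) with (z + 1 - s) by ring.
  replace (z + s + 1) with (z + 1 + s) by ring.
  exact Hss.
Qed.

Lemma dA_root : dA d * dA (a + 1) < 0 -> exists z, d <= z <= a + 1 /\ dA z = 0.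
Proof. apply cont_on_ivt; [lra | exact dA_cont]. Qed.

Lemma dB_root : dB b * dB c < 0 -> exists z, b <= z <= c /\ dB z = 0.
Proof. apply cont_on_ivt; [lra | exact dB_cont]. Qed.

Lemma g_e_same_sign : 0 < (g c - e c) * (g (a + 1) - e (a + 1)).
Proof.
  apply (same_sign_of_no_root (fun t => g t - e t) c (a + 1)); [lra | | | lra].
  - apply cont_on_minus; [eapply cont_on_sub; [| | exact g_cont]; lra |].
    eapply cont_on_sub; [| | exact e_cont]; lra.
  - intros t Ht E0; apply (GE_apart t Ht); lra.
Qed.

Lemma g_f_same_sign : 0 < (g (a + 1) - f (a + 1)) * (g (b + 1) - f (b + 1)).
Proof.
  assert (C : cont_on (fun t => g t - f t) d (b + 1)).
  { apply cont_on_minus; [eapply cont_on_sub; [| | exact g_cont]; lra |].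
    eapply cont_on_sub; [| | exact f_cont]; lra. }
  assert (Nz : forall t, d <= t <= b + 1 -> g t - f t <> 0)
    by (intros t Ht E0; apply (GF_apart t Ht); lra).
  pose proof (same_sign_of_no_root _ d (b + 1) ltac:(lra) C Nz (a + 1) ltac:(lra)).
  pose proof (same_sign_of_no_root _ d (b + 1) ltac:(lra) C Nz (b + 1) ltac:(lra)).
  simpl in *; destruct (Rlt_or_le 0 (g d - f d)); nra.
Qed.

Section VerticesBelow.

Hypotheses (v3_below : y3 < e c) (v4_below : y4 < e d).

Lemma v1_above_of_v2_above : f (b + 1) < y2 -> f (a + 1) < y1.
Proof.
  intros H2; pose proof g_e_same_sign; pose proof g_f_same_sign.
  rewrite g_c, g_b1, e_a1 in *.
  assert (g (a + 1) < y1) by nra.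
  assert (f (a + 1) < g (a + 1)) by nra.
  lra.
Qed.

Lemma cross_v2_below_v1_above : cross E F -> y2 < f (b + 1) /\ f (a + 1) < y1.
Proof.
  intros C; apply cross_iff_root in C.
  assert (A_d : 0 < dA d) by (unfold dA; lra).
  assert (B_c : 0 < dB c) by (unfold dB; lra).
  destruct (Rdichotomy _ _ f_b1) as [H2 | H2].
  - pose proof (v1_above_of_v2_above H2) as H1.
    assert (A_a1 : 0 < dA (a + 1)) by (unfold dA; lra).
    assert (B_b : 0 < dB b) by (unfold dB; lra).
    exfalso; destruct C as [[z [Hz Z]] | [z [Hz Z]]];
      [apply (dA_no_root ltac:(nra) z Hz Z) | apply (dB_no_root ltac:(nra) z Hz Z)].
  - split; [exact H2 |].
    destruct (Rdichotomy _ _ f_a1) as [H1 | H1]; [exact H1 | exfalso].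
    destruct dA_root as [z [Hz Z]]; [unfold dA in *; nra |].
    destruct dB_root as [z' [Hz' Z']]; [unfold dB in *; nra |].
    exact (dA_dB_roots_exclusive z z' Hz Hz' Z Z').
Qed.

Lemma dB_root_of_v2_below : y2 < f (b + 1) -> exists z, b < z < c /\ dB z = 0.
Proof.
  intros H2.
  destruct dB_root as [z [Hz Z]]; [unfold dB; nra |].
  exists z; split; [| exact Z].
  assert (z <> b) by (intros ->; unfold dB in Z; lra).
  assert (z <> c) by (intros ->; unfold dB in Z; lra).
  lra.
Qed.

Lemma cross_of_v2_below : y2 < f (b + 1) -> cross E F.
Proof.
  intros H2; destruct (dB_root_of_v2_below H2) as [z [Hz Z]].
  apply cross_iff_root; right; exists z; split; [lra | exact Z].
Qed.

Lemma f_lt_e_of_cross : cross E F -> forall t, d <= t <= a + 1 -> f t < e t.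
Proof.
  intros C t Ht; destruct (cross_v2_below_v1_above C) as [_ H1].
  assert (Pos : 0 < dA d * dA (a + 1)) by (unfold dA; nra).
  pose proof (same_sign_of_no_root dA d (a + 1) ltac:(lra) dA_cont (dA_no_root Pos) t Ht).
  unfold dA in *; nra.
Qed.

Lemma quadrilateral_below :
  (cross E F <-> cross (mkC b 1 e) (mkC 1 (c + 1) f)) /\
  (cross E F <->
     below F (b, y2) /\ above F (a, y1) /\ prec (mkC 1 (c + 1) f) (mkC 1 (a + 1) e)) /\
  (disjoint E F <-> above F (a, y1) /\ above F (b, y2)).
Proof.
  assert (v1_above : above F (a, y1) <-> f (a + 1) < y1)
    by (apply (above_at F (a + 1)); unfold interior; simpl; try lra; apply cx_add1; lra).
  assert (v2_below : below F (b, y2) <-> y2 < f (b + 1))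
    by (apply (below_at F (b + 1)); unfold interior; simpl; try lra; apply cx_add1; lra).
  assert (v2_above : above F (b, y2) <-> f (b + 1) < y2)
    by (apply (above_at F (b + 1)); unfold interior; simpl; try lra; apply cx_add1; lra).
  split; [split | split; [split |]].
  - intros C; destruct (cross_v2_below_v1_above C) as [H2 _].
    destruct (dB_root_of_v2_below H2) as [z [Hz Z]].
    exists z, (z + 1); apply (crosses_at_local b (a + 1) e d (c + 1) f); [| lra | lra].
    apply dB_root_crosses; [lra | exact Z].
  - intros [t [s C]]; exists t, s.
    pose proof C as [[I1 I1'] [[I2 I2'] _]]; simpl in *.
    apply (crosses_at_local b 1 e 1 (c + 1) f); [exact C | lra | lra].
  - intros C; destruct (cross_v2_below_v1_above C) as [H2 H1].
    split; [apply v2_below, H2 | split; [apply v1_above, H1 |]].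
    apply prec_of_lt; [lra | lra |].
    intros t Ht Ht'; apply f_lt_e_of_cross; [exact C | lra].
  - intros [H2 _]; apply cross_of_v2_below, v2_below, H2.
  - rewrite disjoint_iff_not_cross, v1_above, v2_above; split.
    + intros NC.
      assert (H2 : f (b + 1) < y2).
      { destruct (Rdichotomy _ _ f_b1) as [H2 | H2]; [exact H2 |].
        exfalso; apply NC, cross_of_v2_below, H2. }
      split; [apply v1_above_of_v2_above |]; exact H2.
    + intros [_ H2] C; destruct (cross_v2_below_v1_above C); lra.
Qed.

End VerticesBelow.

End Quadrilateral.
Lemma flag_vx_lt n vx vy eg i j : is_flag n vx vy eg ->
  (1 <= i)%nat -> (i < j)%nat -> (j <= n)%nat -> vx i < vx j.
Proof.
  intros [_ [Hinc _]] Hi Hij Hj; induction j as [| j IH]; [lia |].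
  destruct (Nat.eq_dec i j) as [-> | Hne]; [apply Hinc; lia |].
  apply Rlt_trans with (vx j); [apply IH; lia | apply Hinc; lia].
Qed.

Lemma flag_edge_avoids_vertex n vx vy eg i j k t : is_flag n vx vy eg ->
  (1 <= i < j)%nat -> (j <= n)%nat -> (1 <= k <= n)%nat -> k <> i -> k <> j ->
  vx j <= t <= vx i + 1 -> cx t = vx k -> eg i j t <> vy k.
Proof.
  intros [_ [_ [He _]]] Hij Hj Hk Hki Hkj Ht Ex Eg.
  destruct (He i j Hij Hj) as [_ [_ [_ Avoid]]].
  apply (Avoid k Hk Hki Hkj t Ht); unfold pt, vtx; simpl; rewrite Ex, Eg; reflexivity.
Qed.

Lemma flag_edges_meet_once n vx vy eg i j k l t1 s1 t2 s2 : is_flag n vx vy eg ->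
  (1 <= i < j)%nat -> (j <= n)%nat -> (1 <= k < l)%nat -> (l <= n)%nat -> (i, j) <> (k, l) ->
  vx j <= t1 <= vx i + 1 -> vx l <= s1 <= vx k + 1 ->
  vx j <= t2 <= vx i + 1 -> vx l <= s2 <= vx k + 1 ->
  cx t1 = cx s1 -> eg i j t1 = eg k l s1 -> cx t2 = cx s2 -> eg i j t2 = eg k l s2 ->
  cx t1 = cx t2.
Proof.
  intros [_ [_ [_ Hp]]] Hij Hj Hkl Hl Hne H1 H2 H3 H4 Ex1 Eg1 Ex2 Eg2.
  destruct (Hp i j k l Hij Hj Hkl Hl Hne) as [Once _].
  assert (P : pt (edge vx eg i j) t1 = pt (edge vx eg i j) t2)
    by (apply (Once t1 s1 t2 s2 H1 H2 H3 H4); unfold pt; simpl; f_equal; assumption).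
  injection P; auto.
Qed.

Lemma flag_disjoint_edges_meet_crossing n vx vy eg i j k l t s : is_flag n vx vy eg ->
  (1 <= i < j)%nat -> (j <= n)%nat -> (1 <= k < l)%nat -> (l <= n)%nat ->
  i <> k -> i <> l -> j <> k -> j <> l ->
  vx j <= t <= vx i + 1 -> vx l <= s <= vx k + 1 -> cx t = cx s -> eg i j t = eg k l s ->
  crosses_at (edge vx eg i j) (edge vx eg k l) t s.
Proof.
  intros [_ [_ [_ Hp]]] Hij Hj Hkl Hl Hik Hil Hjk Hjl Ht Hs Ex Eg.
  destruct (Hp i j k l Hij Hj Hkl Hl ltac:(intros E; injection E; lia)) as [_ Meet].
  destruct (Meet t s Ht Hs) as [[m [Hm1 [Hm2 _]]] | C];
    [unfold pt; simpl; f_equal; assumption | lia | exact C].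
Qed.

Lemma flag_below_case n vx vy eg i1 i2 i3 i4 : is_flag n vx vy eg ->
  (0 < i1)%nat -> (i1 < i2)%nat -> (i2 < i3)%nat -> (i3 < i4)%nat -> (i4 <= n)%nat ->
  below (edge vx eg i1 i2) (vtx vx vy i3) /\ below (edge vx eg i1 i2) (vtx vx vy i4) ->
  (cross (edge vx eg i1 i2) (edge vx eg i3 i4) <->
   cross (edge_plus vx eg i1 i2) (edge_minus vx eg i3 i4)) /\
  (cross (edge vx eg i1 i2) (edge vx eg i3 i4) <->
   below (edge vx eg i3 i4) (vtx vx vy i2) /\ above (edge vx eg i3 i4) (vtx vx vy i1) /\
   prec (edge_minus vx eg i3 i4) (edge_minus vx eg i1 i2)) /\
  (disjoint (edge vx eg i1 i2) (edge vx eg i3 i4) <->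
   above (edge vx eg i3 i4) (vtx vx vy i1) /\ above (edge vx eg i3 i4) (vtx vx vy i2)).
Proof.
  intros HF H1 H12 H23 H34 H4 [B3 B4].
  pose proof HF as [Hr [_ [He _]]].
  assert (Ra : 0 < vx i1) by (apply Hr; lia).
  assert (Rd : vx i4 < 1) by (apply Hr; lia).
  assert (Lab : vx i1 < vx i2) by (apply (flag_vx_lt n vx vy eg); auto; lia).
  assert (Lbc : vx i2 < vx i3) by (apply (flag_vx_lt n vx vy eg); auto; lia).
  assert (Lcd : vx i3 < vx i4) by (apply (flag_vx_lt n vx vy eg); auto; lia).
  destruct (He i1 i2 ltac:(lia) ltac:(lia)) as [Ce [Eb [Ea1 _]]].
  destruct (He i3 i4 ltac:(lia) ltac:(lia)) as [Cf [Fd [Fc1 _]]].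
  destruct (He i2 i3 ltac:(lia) ltac:(lia)) as [Cg [Gc [Gb1 _]]].
  apply (below_at (edge vx eg i1 i2) (vx i3)) in B3;
    [| simpl; lra .. | unfold interior; simpl; lra | apply cx_id; lra].
  apply (below_at (edge vx eg i1 i2) (vx i4)) in B4;
    [| simpl; lra .. | unfold interior; simpl; lra | apply cx_id; lra].
  refine (quadrilateral_below (vx i1) (vx i2) (vx i3) (vx i4) (vy i1) (vy i2) (vy i3) (vy i4)
            (eg i1 i2) (eg i3 i4) (eg i2 i3) Ra Lab Lbc Lcd Rd Ce Cf Cg Eb Ea1 Fd Fc1 Gc Gb1
            _ _ _ _ _ _ _ _ B3 B4).
  - apply (flag_edge_avoids_vertex n vx vy eg i3 i4 i1); try lia; try lra; auto.
    apply cx_add1; lra.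
  - apply (flag_edge_avoids_vertex n vx vy eg i3 i4 i2); try lia; try lra; auto.
    apply cx_add1; lra.
  - apply (flag_edge_avoids_vertex n vx vy eg i1 i2 i3); try lia; try lra; auto.
    apply cx_id; lra.
  - apply (flag_edge_avoids_vertex n vx vy eg i1 i2 i4); try lia; try lra; auto.
    apply cx_id; lra.
  - intros t s Ht Hs.
    apply (flag_disjoint_edges_meet_crossing n vx vy eg i1 i2 i3 i4); auto; lia.
  - intros t1 s1 t2 s2 Ht1 Hs1 Ht2 Hs2.
    apply (flag_edges_meet_once n vx vy eg i1 i2 i3 i4); auto; try lia.
    intros E; injection E; lia.
  - intros t Ht Eq.
    apply (cx_not_in_gap t (vx i2) (vx i3) (vx i1)); try lra.
    rewrite <- (cx_add1 (vx i2)) by lra.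
    apply (flag_edges_meet_once n vx vy eg i2 i3 i1 i2 t t (vx i2 + 1) (vx i2));
      auto; try lia; try lra.
    + intros E; injection E; lia.
    + rewrite cx_add1, cx_id; lra.
  - intros t Ht Eq.
    apply (cx_not_in_gap t (vx i3) (vx i4) (vx i2)); try lra.
    rewrite <- (cx_id (vx i3)) by lra.
    apply (flag_edges_meet_once n vx vy eg i2 i3 i3 i4 t t (vx i3) (vx i3 + 1));
      auto; try lia; try lra.
    + intros E; injection E; lia.
    + rewrite cx_add1, cx_id; lra.
Qed.

Lemma is_flag_mirror n vx vy eg : is_flag n vx vy eg ->
  is_flag n vx (fun k => - vy k) (fun i j t => - eg i j t).
Proof.
  intros [Hr [Hinc [He Hp]]]; split; [exact Hr | split; [exact Hinc | split]].
  - intros i j Hij Hj; destruct (He i j Hij Hj) as [C [Ej [Ei Avoid]]].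
    split; [exact (cont_on_opp _ _ _ C) |].
    split; [rewrite Ej; reflexivity | split; [rewrite Ei; reflexivity |]].
    intros k Hk Hki Hkj t Ht E; apply (Avoid k Hk Hki Hkj t Ht), mirror_pt_inj, E.
  - intros i j k l Hij Hj Hkl Hl Hne; destruct (Hp i j k l Hij Hj Hkl Hl Hne) as [Once Meet].
    split.
    + intros t1 s1 t2 s2 H1 H2 H3 H4 E1 E2.
      change (mirror_pt (pt (edge vx eg i j) t1) = mirror_pt (pt (edge vx eg i j) t2)).
      f_equal; apply (Once t1 s1 t2 s2 H1 H2 H3 H4); apply mirror_pt_inj; assumption.
    + intros t s Ht Hs E.
      apply (mirror_pt_inj (pt (edge vx eg i j) t) (pt (edge vx eg k l) s)) in E.
      destruct (Meet t s Ht Hs E) as [[m [Hm1 [Hm2 Em]]] | C].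
      * left; exists m; split; [exact Hm1 | split; [exact Hm2 |]].
        change (mirror_pt (pt (edge vx eg i j) t) = mirror_pt (vtx vx vy m)).
        rewrite Em; reflexivity.
      * right; apply (crosses_at_mirror (edge vx eg i j) (edge vx eg k l)), C.
Qed.

Lemma edge_mirror vx eg i j : edge vx (fun i j t => - eg i j t) i j = mirror (edge vx eg i j).
Proof. reflexivity. Qed.

Lemma edge_plus_mirror vx eg i j :
  edge_plus vx (fun i j t => - eg i j t) i j = mirror (edge_plus vx eg i j).
Proof. reflexivity. Qed.

Lemma edge_minus_mirror vx eg i j :
  edge_minus vx (fun i j t => - eg i j t) i j = mirror (edge_minus vx eg i j).
Proof. reflexivity. Qed.

Lemma vtx_mirror vx vy k : vtx vx (fun k => - vy k) k = mirror_pt (vtx vx vy k).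
Proof. reflexivity. Qed.

Theorem claim12 (n : nat) (vx vy : nat -> R) (eg : nat -> nat -> R -> R)
  (i1 i2 i3 i4 : nat) :
  is_flag n vx vy eg ->
  (0 < i1)%nat -> (i1 < i2)%nat -> (i2 < i3)%nat -> (i3 < i4)%nat -> (i4 <= n)%nat ->
  ((below (edge vx eg i1 i2) (vtx vx vy i3) /\ below (edge vx eg i1 i2) (vtx vx vy i4)) ->
     (cross (edge vx eg i1 i2) (edge vx eg i3 i4) <->
      cross (edge_plus vx eg i1 i2) (edge_minus vx eg i3 i4)) /\
     (cross (edge vx eg i1 i2) (edge vx eg i3 i4) <->
      (below (edge vx eg i3 i4) (vtx vx vy i2) /\ above (edge vx eg i3 i4) (vtx vx vy i1) /\
       prec (edge_minus vx eg i3 i4) (edge_minus vx eg i1 i2))) /\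
     (disjoint (edge vx eg i1 i2) (edge vx eg i3 i4) <->
      (above (edge vx eg i3 i4) (vtx vx vy i1) /\ above (edge vx eg i3 i4) (vtx vx vy i2)))) /\
  ((above (edge vx eg i1 i2) (vtx vx vy i3) /\ above (edge vx eg i1 i2) (vtx vx vy i4)) ->
     (cross (edge vx eg i1 i2) (edge vx eg i3 i4) <->
      cross (edge_plus vx eg i1 i2) (edge_minus vx eg i3 i4)) /\
     (cross (edge vx eg i1 i2) (edge vx eg i3 i4) <->
      (above (edge vx eg i3 i4) (vtx vx vy i2) /\ below (edge vx eg i3 i4) (vtx vx vy i1) /\
       prec (edge_minus vx eg i1 i2) (edge_minus vx eg i3 i4))) /\
     (disjoint (edge vx eg i1 i2) (edge vx eg i3 i4) <->
      (below (edge vx eg i3 i4) (vtx vx vy i1) /\ below (edge vx eg i3 i4) (vtx vx vy i2)))).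
Proof.
  intros HF Hi1 H12 H23 H34 H4; split.
  - exact (flag_below_case n vx vy eg i1 i2 i3 i4 HF Hi1 H12 H23 H34 H4).
  - pose proof (flag_below_case n vx (fun k => - vy k) (fun i j t => - eg i j t) i1 i2 i3 i4
                  (is_flag_mirror n vx vy eg HF) Hi1 H12 H23 H34 H4) as M.
    rewrite !edge_mirror, !edge_plus_mirror, !edge_minus_mirror, !vtx_mirror,
      !below_mirror, !above_mirror, !cross_mirror, !disjoint_mirror, !prec_mirror in M.
    exact M.
Qed.
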